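(* Let $g>0$, $\ell>0$, $p_0<p_1<0$, $[\![\rho]\!]<0$ and a vorticity strength function $\gamma$ be given. If $\Gamma_{\mathrm{rel}}:[p_1,0]\to(0,\infty)$ satisfies the compatibility condition $$\partial_p\big(\Gamma_{\mathrm{rel}}(p)^2\big)=2\gamma(-p),\qquad \ell=\int_{p_1}^0\frac{dp}{\Gamma_{\mathrm{rel}}(p)},$$ then there exists a one-parameter family $\{(H(\cdot;\lambda),Q(\lambda)):\lambda>0\}$ of solutions to the laminar flow problem with $H_p>0$, each member having prescribed relative circulation $\Gamma_{\mathrm{rel}}$ (i.e. $H_p^{-1}=\Gamma_{\mathrm{rel}}$ on $[p_1,0]$). Explicitly $$H(p;\lambda)=\begin{cases}\displaystyle\int_{p_1}^p\frac{dr}{\Gamma_{\mathrm{rel}}(r)}+\frac{p_1-p_0}{\lambda}, & p_1<p<0,\\[2mm]\dfrac{p-p_0}{\lambda}, & p_0<p<p_1,\end{cases}\qquad Q(\lambda)=\frac{2g[\![\rho]\!](p_1-p_0)}{\lambda}+\Gamma_{\mathrm{rel}}(p_1)^2-\lambda^2 .$$ The depth of the fluid at parameter $\lambda$ is $d(\lambda)=H(p_1;\lambda)=\dfrac{p_1-p_0}{\lambda}$ and the width of the channel is $W(\lambda)=\ell+d(\lambda)$.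
   Context: Laminar flow problem: find $Q\in\mathbb R$ and $H\in C([p_0,0])$, $C^2$ on $[p_0,p_1]$ and on $[p_1,0]$, with $H_{pp}=0$ on $(p_0,p_1)$; $H_{pp}=-\gamma(-p)H_p^3$ on $(p_1,0)$; $[\![H_p^{-2}]\!]+2g[\![\rho]\!]H(p_1)-Q=0$; $H(0)=\ell+d(H)$ with $d(H)=H(p_1)$; $H(p_0)=0$. Here $[\![f]\!]=f(p_1^+)-f(p_1^-)$, $[\![\rho]\!]=\rho_{\mathrm{air}}-\rho_{\mathrm{water}}$, $g$ the gravitational constant, and $\gamma$ a given smooth real function (vorticity strength function of the air). *)

From Stdlib Require Import Reals.
From Coquelicot Require Export Coquelicot.
From Stdlib Require Export Reals.
Open Scope R_scope.

Definition Icc (a b : R) : R -> Prop := fun x => a <= x <= b.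

(* f is C^2 on the closed interval [a,b], with first derivative f1 and second
   derivative f2 (derivatives taken relative to [a,b], i.e. one-sided at the
   endpoints), and f2 continuous on [a,b]. *)
Definition C2_on (a b : R) (f f1 f2 : R -> R) : Prop :=
  forall x, a <= x <= b ->
    D_in f f1 (Icc a b) x /\ D_in f1 f2 (Icc a b) x /\ continue_in f2 (Icc a b) x.

Definition smooth (f : R -> R) : Prop :=
  exists D : nat -> R -> R, D O = f /\
    forall n x, derivable_pt_lim (D n) x (D (S n) x).

(* The laminar flow problem, with the one-sided derivatives of H on the two
   pieces [p0,p1] (HL1, HL2) and [p1,0] (HR1, HR2) made explicit.
   rho_jump stands for [[rho]] = rho_air - rho_water. *)
Definition laminar_solution (g rho_jump ell : R) (gamma : R -> R) (p0 p1 : R)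
    (H : R -> R) (Q : R) (HL1 HL2 HR1 HR2 : R -> R) : Prop :=
  (forall x, p0 <= x <= 0 -> continue_in H (Icc p0 0) x) /\
  C2_on p0 p1 H HL1 HL2 /\
  C2_on p1 0 H HR1 HR2 /\
  (forall p, p0 < p < p1 -> HL2 p = 0) /\
  (forall p, p1 < p < 0 -> HR2 p = - gamma (- p) * (HR1 p) ^ 3) /\
  (/ (HR1 p1) ^ 2 - / (HL1 p1) ^ 2) + 2 * g * rho_jump * H p1 - Q = 0 /\
  H 0 = ell + H p1 /\
  H p0 = 0.

Definition H_lam (Gamma : R -> R) (p0 p1 lam : R) (p : R) : R :=
  if Rle_dec p p1 then (p - p0) / lam
  else RInt (fun r => / Gamma r) p1 p + (p1 - p0) / lam.

Definition Q_lam (g rho_jump : R) (Gamma : R -> R) (p0 p1 lam : R) : R :=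
  2 * g * rho_jump * (p1 - p0) / lam + (Gamma p1) ^ 2 - lam ^ 2.

(* Below p1 the profile is the straight line (p - p0)/lam, so H_pp = 0 there.
   Above p1 it is a primitive of 1/Gamma, so H_p = 1/Gamma and, differentiating
   Gamma^2 (whose derivative is 2 gamma(-p) by the compatibility condition),
   H_pp = -gamma(-p) H_p^3.  The two pieces meet at p1 with value (p1 - p0)/lam,
   the jump condition is the definition of Q, and ell = int 1/Gamma gives
   H(0) = ell + H(p1).  Since Gamma is only given on [p1,0], 1/Gamma is
   extended constantly outside [p1,0]: the extension is continuous on all of R,
   so its integral is differentiable everywhere and the one-sided derivatives at
   the endpoints come for free. *)

From Stdlib Require Import Reals Lra.
From Coquelicot Require Import Coquelicot.
Open Scope R_scope.

Lemma limit1_in_subset (f : R -> R) (D D' : R -> Prop) (l x : R) :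
  limit1_in f D l x -> (forall y, D' y -> D y) -> limit1_in f D' l x.
Proof.
  intros Hlim HD eps Heps.
  destruct (Hlim eps Heps) as [delta [Hdelta Hclose]].
  exists delta; split; [exact Hdelta|].
  intros y [Hy Hyx]; apply Hclose; split; auto.
Qed.

Lemma limit1_in_ext (f g : R -> R) (D : R -> Prop) (l x : R) :
  limit1_in f D l x -> (forall y, D y -> f y = g y) -> limit1_in g D l x.
Proof.
  intros Hlim Hfg eps Heps.
  destruct (Hlim eps Heps) as [delta [Hdelta Hclose]].
  exists delta; split; [exact Hdelta|].
  intros y [Hy Hyx]; rewrite <- Hfg by exact Hy; apply Hclose; split; auto.
Qed.

Lemma D_in_deriv_eq (f d d' : R -> R) (D : R -> Prop) (x : R) :
  D_in f d D x -> d x = d' x -> D_in f d' D x.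
Proof. unfold D_in; intros Hd <-; exact Hd. Qed.

Lemma continue_in_agree (f g : R -> R) (D : R -> Prop) (x : R) :
  continuity_pt f x -> D x -> (forall y, D y -> f y = g y) ->
  continue_in g D x.
Proof.
  intros Hf Hx Hfg; unfold continue_in.
  rewrite <- Hfg by exact Hx.
  apply limit1_in_ext with f; [|intros y [Hy _]; exact (Hfg y Hy)].
  apply limit1_in_subset with (1 := Hf); intros y [_ Hyx]; split; [exact I|exact Hyx].
Qed.

Lemma D_in_agree (f g d : R -> R) (D : R -> Prop) (x : R) :
  derivable_pt_lim f x (d x) -> D x -> (forall y, D y -> f y = g y) ->
  D_in g d D x.
Proof.
  intros Hf Hx Hfg.
  assert (Hfree : D_in f d no_cond x)
    by exact (proj2 (derive_pt_D_in f d x (exist _ (d x) Hf)) eq_refl).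
  unfold D_in in *.
  apply limit1_in_ext with (fun y => (f y - f x) / (y - x)).
  - apply limit1_in_subset with (1 := Hfree).
    intros y [_ Hyx]; split; [exact I|exact Hyx].
  - intros y [Hy _]; rewrite !Hfg by assumption; reflexivity.
Qed.

(* |G y - G x| = |G y^2 - G x^2| / (G y + G x) <= |G y^2 - G x^2| / G x. *)
Lemma continue_in_of_sqr (G : R -> R) (D : R -> Prop) (x : R) :
  (forall y, D y -> 0 < G y) -> D x ->
  continue_in (fun r => G r ^ 2) D x -> continue_in G D x.
Proof.
  unfold continue_in, limit1_in, limit_in; simpl; unfold Rdist.
  intros Hpos Hx Hsqr eps Heps.
  destruct (Hsqr (eps * G x)) as [delta [Hdelta Hclose]].
  { apply Rmult_lt_0_compat; auto. }
  exists delta; split; [exact Hdelta|].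
  intros y [[Hy Hyx] Hyd].
  specialize (Hclose y (conj (conj Hy Hyx) Hyd)).
  pose proof (Hpos y Hy); pose proof (Hpos x Hx).
  apply Rmult_lt_reg_r with (G y + G x); [lra|].
  rewrite <- (Rabs_pos_eq (G y + G x)) by lra; rewrite <- Rabs_mult.
  replace ((G y - G x) * (G y + G x)) with (G y ^ 2 - G x ^ 2) by ring.
  apply Rlt_le_trans with (1 := Hclose); rewrite Rabs_pos_eq by lra; nra.
Qed.

(* (1/G y - 1/G x)/(y - x) = - (G y^2 - G x^2)/(y - x) / (G y G x (G y + G x)). *)
Lemma D_in_inv_of_sqr (G dG2 : R -> R) (D : R -> Prop) (x : R) :
  (forall y, D y -> 0 < G y) -> D x ->
  D_in (fun r => G r ^ 2) dG2 D x -> continue_in G D x ->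
  D_in (fun r => / G r) (fun r => - dG2 r / (2 * G r ^ 3)) D x.
Proof.
  intros Hpos Hx Hd Hc.
  pose proof (Hpos x Hx) as HGx.
  unfold continue_in, D_in in *.
  pose proof (limit_free G (D_x D x) x x) as Hcst.
  pose proof (limit_mul _ _ _ _ _ x (limit_mul _ _ _ _ _ x Hc Hcst)
                (limit_plus _ _ _ _ _ x Hc Hcst)) as Hden.
  assert (Hden_ne : G x * G x * (G x + G x) <> 0)
    by (apply Rgt_not_eq; repeat apply Rmult_lt_0_compat; lra).
  pose proof (limit_mul _ _ _ _ _ x Hd
                (limit_Ropp _ _ _ x (limit_inv _ _ _ x Hden Hden_ne))) as Hquot.
  replace (- dG2 x / (2 * G x ^ 3)) with (dG2 x * - / (G x * G x * (G x + G x)))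
    by (field; lra).
  apply limit1_in_ext with (1 := Hquot).
  intros y [Hy Hyx]; pose proof (Hpos y Hy); cbv beta.
  field; repeat split; try lra; intro E; apply Hyx; lra.
Qed.

Lemma smooth_continuity_pt (f : R -> R) (x : R) : smooth f -> continuity_pt f x.
Proof.
  intros [Df [HD0 HDS]].
  apply derivable_continuous_pt; rewrite <- HD0.
  exists (Df 1%nat x); apply HDS.
Qed.

Definition clamp (a b t : R) : R := Rmax a (Rmin t b).

Lemma clamp_in (a b t : R) : a <= b -> a <= clamp a b t <= b.
Proof. unfold clamp, Rmax, Rmin; intros; repeat destruct Rle_dec; lra. Qed.

Lemma clamp_id (a b t : R) : a <= t <= b -> clamp a b t = t.
Proof. unfold clamp, Rmax, Rmin; intros; repeat destruct Rle_dec; lra. Qed.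

Lemma clamp_le (a b t : R) : a <= b -> t <= a -> clamp a b t = a.
Proof. unfold clamp, Rmax, Rmin; intros; repeat destruct Rle_dec; lra. Qed.

Lemma clamp_ge (a b t : R) : a <= b -> b <= t -> clamp a b t = b.
Proof. unfold clamp, Rmax, Rmin; intros; repeat destruct Rle_dec; lra. Qed.

Lemma Rabs_clamp_sub_le (a b x y : R) : a <= b ->
  Rabs (clamp a b y - clamp a b x) <= Rabs (y - x).
Proof.
  unfold clamp, Rmax, Rmin; intros.
  repeat destruct Rle_dec; unfold Rabs; repeat destruct Rcase_abs; lra.
Qed.

(* Clamping is 1-Lipschitz, so f o clamp inherits the continuity of f within [a,b]. *)
Lemma continuity_pt_comp_clamp (f : R -> R) (a b x : R) : a <= b ->
  (forall y, a <= y <= b -> continue_in f (Icc a b) y) ->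
  continuity_pt (fun t => f (clamp a b t)) x.
Proof.
  intros Hab Hf.
  pose proof (clamp_in a b x Hab) as Hcx.
  specialize (Hf _ Hcx).
  unfold continuity_pt, continue_in, limit1_in, limit_in in *; simpl in *;
    unfold Rdist in *.
  intros eps Heps; destruct (Hf eps Heps) as [delta [Hdelta Hclose]].
  exists delta; split; [exact Hdelta|].
  intros y [_ Hyx].
  destruct (Req_dec (clamp a b y) (clamp a b x)) as [E|E].
  - rewrite E; unfold Rminus; rewrite Rplus_opp_r, Rabs_R0; lra.
  - apply Hclose; split; [split; [apply clamp_in, Hab | intro E'; apply E; symmetry; exact E']|].
    pose proof (Rabs_clamp_sub_le a b x y Hab); lra.
Qed.

Lemma continuity_pt_clamp (a b x : R) : a <= b -> continuity_pt (clamp a b) x.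
Proof.
  intros Hab; apply (continuity_pt_comp_clamp (fun t => t)); [exact Hab|].
  intros y Hy; apply continue_in_agree with (fun t => t);
    [apply continuity_pt_id | exact Hy | reflexivity].
Qed.

Lemma derivable_pt_lim_RInt (f : R -> R) (a x : R) :
  (forall t, continuity_pt f t) -> derivable_pt_lim (fun y => RInt f a y) x (f x).
Proof.
  intros Hf; apply is_derive_Reals, (is_derive_RInt f _ a x).
  - apply filter_forall; intros y.
    apply (RInt_correct f a y), ex_RInt_continuous.
    intros z _; apply continuity_pt_filterlim, Hf.
  - apply continuity_pt_filterlim, Hf.
Qed.

Section ExplicitFamily.

Variables (p0 p1 lam : R) (gamma Gamma : R -> R).
Hypotheses (Hp01 : p0 < p1) (Hp1 : p1 < 0) (Hlam : 0 < lam).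
Hypothesis Hgamma : smooth gamma.
Hypothesis HGamma_pos : forall p, p1 <= p <= 0 -> 0 < Gamma p.
Hypothesis HGamma_sqr : forall p, p1 <= p <= 0 ->
  D_in (fun r => Gamma r ^ 2) (fun r => 2 * gamma (- r)) (Icc p1 0) p.

Local Notation H := (H_lam Gamma p0 p1 lam).

Definition inv_Gamma_ext (t : R) : R := / Gamma (clamp p1 0 t).

Definition inv_Gamma_primitive (y : R) : R := RInt inv_Gamma_ext p1 y.

Lemma Gamma_continue_in (x : R) : p1 <= x <= 0 -> continue_in Gamma (Icc p1 0) x.
Proof.
  intros Hx; apply continue_in_of_sqr; [exact HGamma_pos | exact Hx |].
  exact (cont_deriv _ _ _ _ (HGamma_sqr x Hx)).
Qed.

Lemma inv_Gamma_ext_continuity (x : R) : continuity_pt inv_Gamma_ext x.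
Proof.
  apply (continuity_pt_comp_clamp (fun r => / Gamma r)); [lra|].
  intros y Hy; apply limit_inv; [apply Gamma_continue_in, Hy|].
  apply Rgt_not_eq, HGamma_pos, Hy.
Qed.

Lemma inv_Gamma_ext_eq (t : R) : p1 <= t <= 0 -> inv_Gamma_ext t = / Gamma t.
Proof. intros Ht; unfold inv_Gamma_ext; rewrite clamp_id by exact Ht; reflexivity. Qed.

Lemma inv_Gamma_primitive_p1 : inv_Gamma_primitive p1 = 0.
Proof. unfold inv_Gamma_primitive; rewrite RInt_point; reflexivity. Qed.

Lemma RInt_inv_Gamma (y : R) : p1 <= y <= 0 ->
  RInt (fun r => / Gamma r) p1 y = inv_Gamma_primitive y.
Proof.
  intros Hy; apply RInt_ext; intros z Hz.
  rewrite Rmin_left, Rmax_right in Hz by lra.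
  symmetry; apply inv_Gamma_ext_eq; lra.
Qed.

Lemma H_lam_left (y : R) : y <= p1 -> H y = (y - p0) / lam.
Proof. intros Hy; unfold H_lam; destruct Rle_dec; [reflexivity | lra]. Qed.

Lemma H_lam_right (y : R) : p1 <= y <= 0 ->
  H y = inv_Gamma_primitive y + (p1 - p0) / lam.
Proof.
  intros Hy; unfold H_lam; destruct Rle_dec.
  - replace y with p1 by lra; rewrite inv_Gamma_primitive_p1; ring.
  - rewrite RInt_inv_Gamma by exact Hy; reflexivity.
Qed.

Lemma H_lam_Icc (y : R) : p0 <= y <= 0 ->
  H y = (clamp p0 p1 y - p0) / lam + inv_Gamma_primitive (clamp p1 0 y).
Proof.
  intros Hy; destruct (Rle_dec y p1).
  - rewrite H_lam_left, clamp_id, clamp_le, inv_Gamma_primitive_p1 by lra; ring.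
  - rewrite H_lam_right, clamp_ge, clamp_id by lra; ring.
Qed.

Lemma H_lam_continue_in (x : R) : p0 <= x <= 0 -> continue_in H (Icc p0 0) x.
Proof.
  intros Hx; apply continue_in_agree with
    (fun y => (clamp p0 p1 y - p0) / lam + inv_Gamma_primitive (clamp p1 0 y));
    [| exact Hx | intros y Hy; symmetry; apply H_lam_Icc, Hy].
  apply continuity_pt_plus.
  - apply continuity_pt_mult; [|apply continuity_pt_const; intros ? ?; reflexivity].
    apply continuity_pt_minus; [apply continuity_pt_clamp; lra|].
    apply continuity_pt_const; intros ? ?; reflexivity.
  - apply (continuity_pt_comp (clamp p1 0)); [apply continuity_pt_clamp; lra|].
    apply derivable_continuous_pt; exists (inv_Gamma_ext (clamp p1 0 x)).
    apply derivable_pt_lim_RInt, inv_Gamma_ext_continuity.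
Qed.

Lemma H_lam_C2_left : C2_on p0 p1 H (fun _ => / lam) (fun _ => 0).
Proof.
  intros x Hx; split; [|split].
  - apply D_in_agree with (fun y => (y - p0) / lam);
      [| exact Hx | intros y Hy; symmetry; apply H_lam_left, Hy].
    apply is_derive_Reals; auto_derive; [exact I | field; lra].
  - apply Dconst.
  - exact (limit_free (fun _ => 0) _ x x).
Qed.

Lemma H_lam_C2_right :
  C2_on p1 0 H (fun p => / Gamma p) (fun p => - gamma (- p) * (/ Gamma p) ^ 3).
Proof.
  intros x Hx; split; [|split].
  - apply D_in_agree with (fun y => inv_Gamma_primitive y + (p1 - p0) / lam);
      [| exact Hx | intros y Hy; symmetry; apply H_lam_right, Hy].
    rewrite <- inv_Gamma_ext_eq, <- Rplus_0_r by exact Hx.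
    apply derivable_pt_lim_plus; [|apply derivable_pt_lim_const].
    apply derivable_pt_lim_RInt, inv_Gamma_ext_continuity.
  - eapply D_in_deriv_eq.
    + apply D_in_inv_of_sqr; [exact HGamma_pos | exact Hx | apply HGamma_sqr, Hx |].
      apply Gamma_continue_in, Hx.
    + pose proof (HGamma_pos x Hx); cbv beta; field; lra.
  - apply continue_in_agree with
      (fun p => - gamma (- p) * (inv_Gamma_ext p * (inv_Gamma_ext p * (inv_Gamma_ext p * 1))));
      [| exact Hx | intros y Hy; rewrite inv_Gamma_ext_eq by exact Hy; reflexivity].
    pose proof (inv_Gamma_ext_continuity x).
    repeat apply continuity_pt_mult; try assumption.
    + apply continuity_pt_opp, (continuity_pt_comp Ropp gamma).
      * apply continuity_pt_opp, continuity_pt_id.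
      * apply smooth_continuity_pt, Hgamma.
    + apply continuity_pt_const; intros ? ?; reflexivity.
Qed.

Lemma H_lam_laminar_solution (g rho_jump ell : R) :
  ell = RInt (fun p => / Gamma p) p1 0 ->
  laminar_solution g rho_jump ell gamma p0 p1 H (Q_lam g rho_jump Gamma p0 p1 lam)
    (fun _ => / lam) (fun _ => 0) (fun p => / Gamma p)
    (fun p => - gamma (- p) * (/ Gamma p) ^ 3).
Proof.
  intros Hell.
  split; [exact H_lam_continue_in|].
  split; [exact H_lam_C2_left|].
  split; [exact H_lam_C2_right|].
  split; [reflexivity|].
  split; [reflexivity|].
  split; [|split].
  - rewrite H_lam_left by lra; unfold Q_lam.
    pose proof (HGamma_pos p1 (conj (Rle_refl p1) (Rlt_le _ _ Hp1))).
    field; lra.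
  - rewrite H_lam_right, H_lam_left, Hell, RInt_inv_Gamma by lra; reflexivity.
  - rewrite H_lam_left by lra; unfold Rdiv; ring.
Qed.

End ExplicitFamily.

Theorem lemma4p2 (g ell p0 p1 rho_jump : R) (gamma Gamma : R -> R) :
  0 < g -> 0 < ell -> p0 < p1 -> p1 < 0 -> rho_jump < 0 ->
  smooth gamma ->
  (forall p, p1 <= p <= 0 -> 0 < Gamma p) ->
  (forall p, p1 <= p <= 0 ->
     D_in (fun r => (Gamma r) ^ 2) (fun r => 2 * gamma (- r)) (Icc p1 0) p) ->
  ell = RInt (fun p => / Gamma p) p1 0 ->
  forall lam : R, 0 < lam ->
    exists HL1 HL2 HR1 HR2 : R -> R,
      laminar_solution g rho_jump ell gamma p0 p1
        (H_lam Gamma p0 p1 lam) (Q_lam g rho_jump Gamma p0 p1 lam)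
        HL1 HL2 HR1 HR2 /\
      (forall p, p0 <= p <= p1 -> 0 < HL1 p) /\
      (forall p, p1 <= p <= 0 -> 0 < HR1 p /\ / HR1 p = Gamma p) /\
      H_lam Gamma p0 p1 lam p1 = (p1 - p0) / lam /\
      H_lam Gamma p0 p1 lam 0 = ell + (p1 - p0) / lam.
Proof.
  intros _ _ Hp01 Hp1 _ Hgamma HGamma_pos HGamma_sqr Hell lam Hlam.
  pose proof (H_lam_laminar_solution p0 p1 lam gamma Gamma Hp01 Hp1 Hlam Hgamma
                HGamma_pos HGamma_sqr g rho_jump ell Hell) as Hsol.
  exists (fun _ => / lam), (fun _ => 0), (fun p => / Gamma p),
    (fun p => - gamma (- p) * (/ Gamma p) ^ 3).
  split; [exact Hsol|].
  split; [intros; apply Rinv_0_lt_compat, Hlam|].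
  split; [intros p Hp; split; [apply Rinv_0_lt_compat, HGamma_pos, Hp | apply Rinv_inv]|].
  destruct Hsol as (_ & _ & _ & _ & _ & _ & H0 & _).
  rewrite H_lam_left by lra.
  split; [reflexivity|].
  rewrite H0, H_lam_left by lra; reflexivity.
Qed.
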